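(* Let $\psi\in\mathbb{R}[x]$ have a zero of multiplicity $2$ at $0$, and let $\psi=\psi_2+\dots+\psi_t$ be its expansion into homogeneous polynomials $\psi_j$ of degree $j$, with $\psi_2\neq 0$ and $\psi_t\ne 0$. If the Fischer operator $F_\psi:\mathbb{R}[x]\to\mathbb{R}[x]$ is surjective, then the Fischer operator $F_{\psi_2}:\mathbb{R}[x]\to\mathbb{R}[x]$ is bijective. Moreover, $F_\psi$ is bijective.
   Context: $\mathbb{R}[x]$ denotes the real polynomials in $d$ variables, $\Delta$ the Laplacian, and for a polynomial $\varphi$ the Fischer operator is $F_\varphi(q)=\Delta(\varphi q)$ for $q\in\mathbb{R}[x]$. A polynomial is homogeneous of degree $j$ if $f(rx)=r^jf(x)$ for all $r>0$, $x\in\mathbb{R}^d$. The multiplicity of a zero $x_0$ of $\psi$ is the largest $N$ such that all partial derivatives $\partial^\alpha\psi(x_0)$ with $|\alpha|\le N-1$ vanish. *)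

From mathcomp Require Import all_boot all_order all_algebra.
From mathcomp Require Import reals.
From mathcomp Require Import mpoly.
Set Implicit Arguments. Unset Strict Implicit. Unset Printing Implicit Defensive.
Import Order.TTheory GRing.Theory Num.Theory.
Local Open Scope ring_scope.

Definition laplacian {R : realType} {d : nat} (p : {mpoly R[d]}) : {mpoly R[d]} :=
  \sum_(i < d) ((p^`M(i))^`M(i)).

Definition Fischer {R : realType} {d : nat} (phi : {mpoly R[d]}) :
  {mpoly R[d]} -> {mpoly R[d]} :=
  fun q => laplacian (phi * q).

Definition vanishes_to {R : realType} {d : nat} (N : nat) (psi : {mpoly R[d]}) : Prop :=
  forall m : 'X_{1..d}, (mdeg m < N)%N -> (psi^`M[m]).@[fun _ : 'I_d => 0] = 0.

Definition zero_mult_at0 {R : realType} {d : nat} (psi : {mpoly R[d]}) (N : nat) : Prop :=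
  vanishes_to N psi /\ forall N', vanishes_to N' psi -> (N' <= N)%N.

From HB Require Import structures.
From mathcomp Require Import all_boot all_order all_algebra.
From mathcomp Require Import reals.
From mathcomp Require Import mpoly.
Set Implicit Arguments. Unset Strict Implicit. Unset Printing Implicit Defensive.
Import GRing.Theory.
Local Open Scope ring_scope.

(* Write L = F_psi and L2 = F_{psi_2}.  Multiplication by the 2-form psi_2
   followed by the Laplacian maps k-forms to k-forms, while the terms of
   degree >= 3 of psi turn a polynomial of order k at 0 into one of order
   at least k + 1.  Hence the lowest
   homogeneous component of L q is L2 applied to the lowest component of q,
   and injectivity of L2 on every space of k-forms makes L and L2 injective.
   That injectivity comes from the surjectivity of L: truncated to degrees
   <= k, L is a surjective, hence injective, endomorphism of a
   finite-dimensional space, and on k-forms it agrees with L2.  Being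
   injective on each finite-dimensional space of k-forms, L2 is also onto it,
   hence surjective. *)

Section Support.
Variables (n : nat) (R : nzRingType).
Implicit Types (p q : {mpoly R[n]}) (m : 'X_{1..n}) (P : pred 'X_{1..n}).

Definition msupp_in_pred P : pred {mpoly R[n]} := fun p => all P (msupp p).
Definition msupp_in P : qualifier 0 {mpoly R[n]} := [qualify p | msupp_in_pred P p].

Lemma msupp_inP P p : reflect (forall m, ~~ P m -> p@_m = 0) (p \is msupp_in P).
Proof.
apply: (iffP allP) => [Pp m nPm | p0 m].
  by apply/eqP; rewrite mcoeff_eq0; apply: contra nPm; apply: Pp.
by rewrite mcoeff_msupp; apply: contraR => /p0 ->; rewrite eqxx.
Qed.

Lemma msupp_in_submod_closed P : submod_closed (msupp_in P).
Proof.
split=> [|a p q /msupp_inP hp /msupp_inP hq]; apply/msupp_inP => m nPm.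
  by rewrite mcoeff0.
by rewrite mcoeffD mcoeffZ hp // hq // mulr0 addr0.
Qed.

HB.instance Definition _ P := GRing.isSubmodClosed.Build R {mpoly R[n]}
  (msupp_in_pred P) (msupp_in_submod_closed P).

(* [p \is order_ge k] is the coefficient form of [vanishes_to k p]. *)
Definition order_ge k := msupp_in [pred m | k <= mdeg m]%N.

Lemma order_geP k p :
  reflect (forall m, (mdeg m < k)%N -> p@_m = 0) (p \is order_ge k).
Proof.
by apply: (iffP (msupp_inP _ _)) => h m; [rewrite ltnNge|rewrite -ltnNge]; apply: h.
Qed.

Lemma msupp_in_sub P P' p :
  {subset P <= P'} -> p \is msupp_in P -> p \is msupp_in P'.
Proof. by move=> sPP' /allP hp; apply/allP => m /hp /sPP'. Qed.

Lemma order_ge_le k k' p : (k <= k')%N -> p \is order_ge k' -> p \is order_ge k.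
Proof. by move=> le; apply: msupp_in_sub => m /(leq_trans le). Qed.

Lemma dhomog_msupp_in k p :
  (p \is k.-homog) = (p \is msupp_in [pred m | mdeg m == k]).
Proof. exact: dhomogE. Qed.

Lemma dhomog_order_ge k p : p \is k.-homog -> p \is order_ge k.
Proof.
by rewrite dhomog_msupp_in; apply: msupp_in_sub => m; rewrite !inE => /eqP ->.
Qed.

Lemma order_geM a b p q :
  p \is order_ge a -> q \is order_ge b -> p * q \is order_ge (a + b).
Proof.
move=> /order_geP hp /order_geP hq; apply/order_geP => m lt.
rewrite mcoeffM big1 // => -[m1 m2] /= /eqP mE.
have [lt1|ge1] := ltnP (mdeg m1) a; first by rewrite hp ?mul0r.
rewrite hq ?mulr0 // -(ltn_add2l (mdeg m1)) -mdegD -mE.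
exact: leq_trans lt (leq_add ge1 (leqnn b)).
Qed.

Lemma order_ge_mderiv i k p : p \is order_ge k -> p^`M(i) \is order_ge k.-1.
Proof.
move=> /order_geP hp; apply/order_geP => m lt.
by rewrite mcoeff_mderiv hp ?mul0rn // mdegD mdeg1 addn1 -ltn_predRL.
Qed.

Lemma dhomog_mderiv i k p : p \is k.-homog -> p^`M(i) \is k.-1.-homog.
Proof.
move=> hp; rewrite dhomog_msupp_in; apply/msupp_inP => m /= ne.
rewrite mcoeff_mderiv (dhomog_nemf_coeff hp) ?mul0rn //=.
by rewrite mdegD mdeg1 addn1; apply: contra ne => /eqP <-.
Qed.

Lemma mcoeff_pihomog k p m :
  (pihomog mdeg k p)@_m = if mdeg m == k then p@_m else 0.
Proof.
have [<-|ne] := eqVneq (mdeg m) k; last exact: dhomog_nemf_coeff (pihomogP _ _ _) ne.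
have le : (msize p <= maxn (msize p) (mdeg m).+1)%N := leq_maxl _ _.
rewrite {2}(pihomog_partitionE le) [RHS]raddf_sum (bigD1 (Ordinal (leq_maxr _ _))) //=.
rewrite big1 ?addr0 // => j ne; apply: dhomog_nemf_coeff (pihomogP _ _ _) _.
by apply: contra ne => /eqP mj; apply/eqP/val_inj.
Qed.

Lemma pihomog_order_ge j k p :
  (j < k)%N -> p \is order_ge k -> pihomog mdeg j p = 0.
Proof.
move=> jk /order_geP hp; apply/mpolyP => m; rewrite mcoeff_pihomog mcoeff0.
by case: eqP => // mj; apply: hp; rewrite mj.
Qed.

Lemma order_ge_subpihomog k p :
  p \is order_ge k -> p - pihomog mdeg k p \is order_ge k.+1.
Proof.
move=> /order_geP hp; apply/order_geP => m lt; rewrite mcoeffB mcoeff_pihomog.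
case: eqP => [_|/eqP ne]; first by rewrite subrr.
by rewrite subr0 hp // ltn_neqAle ne -ltnS.
Qed.

Lemma order_ge_msize p : (p \is order_ge (msize p)) = (p == 0).
Proof.
apply/idP/eqP => [/order_geP hp|->]; last exact: rpred0.
apply/mpolyP => m; rewrite mcoeff0.
by have [/msize_mdeg_lt/hp|/memN_msupp_eq0] := boolP (m \in msupp p).
Qed.

Definition mtrunc k p : {mpoly R[n]} := \sum_(j < k) pihomog mdeg j p.

Fact mtrunc_is_linear k : linear (mtrunc k).
Proof.
move=> a p q; rewrite /mtrunc scaler_sumr -big_split.
by apply: eq_bigr => j _; rewrite linearP.
Qed.

HB.instance Definition _ k := GRing.isLinear.Build R {mpoly R[n]} {mpoly R[n]} _
  (mtrunc k) (mtrunc_is_linear k).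

Lemma mcoeff_mtrunc k p m :
  (mtrunc k p)@_m = if (mdeg m < k)%N then p@_m else 0.
Proof.
rewrite raddf_sum /=; under eq_bigr do rewrite mcoeff_pihomog.
case: ltnP => [lt|ge].
  rewrite (bigD1 (Ordinal lt)) //= eqxx big1 ?addr0 // => j ne.
  by case: eqP => // mj; case/eqP: ne; apply: val_inj.
by rewrite big1 // => j _; case: eqP => // mj; move: ge; rewrite mj leqNgt ltn_ord.
Qed.

Lemma mtrunc_order_ge k p : p \is order_ge k -> mtrunc k p = 0.
Proof. by move=> hp; rewrite /mtrunc big1 // => j _; apply: pihomog_order_ge hp. Qed.

Lemma order_ge_submtrunc k p : p - mtrunc k p \is order_ge k.
Proof. by apply/order_geP => m lt; rewrite mcoeffB mcoeff_mtrunc lt subrr. Qed.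

Lemma mtrunc_msupp_in k p : mtrunc k p \is msupp_in [pred m | mdeg m < k]%N.
Proof. by apply/msupp_inP => m /= /negbTE nlt; rewrite mcoeff_mtrunc nlt. Qed.

Lemma mtrunc_id k p : p \is msupp_in [pred m | mdeg m < k]%N -> mtrunc k p = p.
Proof.
move=> /msupp_inP hp; apply/mpolyP => m; rewrite mcoeff_mtrunc.
by case: ifP => // /negbT /hp ->.
Qed.

Lemma additive_surj_homog (f : {additive {mpoly R[n]} -> {mpoly R[n]}}) :
  (forall k g, g \is k.-homog -> exists p, f p = g) -> forall g, exists p, f p = g.
Proof.
move=> surj g.
have hit_mtrunc k : exists p, f p = mtrunc k g.
  elim: k => [|k [q fq]]; first by exists 0; rewrite raddf0 /mtrunc big_ord0.
  have [p fp] := surj _ _ (pihomogP mdeg k g).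
  by exists (q + p); rewrite raddfD fq fp /mtrunc big_ord_recr.
have [p fp] := hit_mtrunc (msize g).
by exists p; rewrite fp /mtrunc -pihomog_partitionE.
Qed.

End Support.

Arguments msupp_in {n R} P.
Arguments order_ge {n R} k.

Lemma rV_linear_inj_surj (F : fieldType) (N : nat)
    (g : {linear 'rV[F]_N -> 'rV[F]_N}) :
  (forall u, g u = 0 -> u = 0) <-> (forall v, exists u, g u = v).
Proof.
split=> [inj v | surj u gu0].
  have A_unit : lin1_mx g \in unitmx.
    by rewrite -row_free_unit; apply/inj_row_free => u; rewrite mul_rV_lin1; apply: inj.
  by exists (v *m invmx (lin1_mx g)); rewrite -mul_rV_lin1 mulmxKV.
have A_unit : lin1_mx g \in unitmx.
  rewrite -row_full_unit -sub1mx; apply/row_subP => i; apply/submxP.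
  by have [w gw] := surj (row i 1%:M); exists w; rewrite mul_rV_lin1 gw.
by rewrite -(mulmxK A_unit u) mul_rV_lin1 gu0 mul0mx.
Qed.

Section FiniteSupport.
Variables (F : fieldType) (n K : nat) (P : pred 'X_{1..n}).
Hypothesis P_bounded : forall m, P m -> (mdeg m < K)%N.

Definition msupp_basis : seq 'X_{1..n} :=
  [seq m <- [seq val m | m <- enum {: 'X_{1..n < K}}] | P m].

Local Notation B := msupp_basis.
Local Notation N := (size B).

Let uniqB : uniq B.
Proof. by rewrite filter_uniq // map_inj_uniq ?enum_uniq //; exact: val_inj. Qed.

Let memB m : (m \in B) = P m.
Proof.
rewrite mem_filter andb_idr // => /P_bounded lt; apply/mapP.
by exists (BMultinom lt); rewrite ?mem_enum.
Qed.

Definition mcoords (p : {mpoly F[n]}) : 'rV[F]_N := \row_(i < N) p@_(nth 0%MM B i).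

Definition mpoly_of_coords (u : 'rV[F]_N) : {mpoly F[n]} :=
  \sum_(i < N) u 0 i *: 'X_[nth 0%MM B i].

Fact mcoords_is_linear : linear mcoords.
Proof. by move=> a p q; apply/rowP => i; rewrite !mxE mcoeffD mcoeffZ. Qed.

HB.instance Definition _ := GRing.isLinear.Build F {mpoly F[n]} 'rV[F]_N _
  mcoords mcoords_is_linear.

Fact mpoly_of_coords_is_linear : linear mpoly_of_coords.
Proof.
move=> a u v; rewrite /mpoly_of_coords scaler_sumr -big_split.
by apply: eq_bigr => i _; rewrite !mxE scalerDl scalerA.
Qed.

HB.instance Definition _ := GRing.isLinear.Build F 'rV[F]_N {mpoly F[n]} _
  mpoly_of_coords mpoly_of_coords_is_linear.

Lemma mcoeff_mpoly_of_coords u m :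
  (mpoly_of_coords u)@_m = \sum_(i < N) u 0 i * (nth 0%MM B i == m)%:R.
Proof.
by rewrite /mpoly_of_coords raddf_sum; apply: eq_bigr => i _ /=; rewrite mcoeffZ mcoeffX.
Qed.

Lemma mpoly_of_coords_msupp_in u : mpoly_of_coords u \is msupp_in P.
Proof.
apply/msupp_inP => m; rewrite -memB => mB; rewrite mcoeff_mpoly_of_coords big1 // => i _.
by case: eqP => [iE|]; [move: mB; rewrite -iE mem_nth | rewrite mulr0].
Qed.

Lemma mpoly_of_coordsK : cancel mpoly_of_coords mcoords.
Proof.
move=> u; apply/rowP => j; rewrite mxE mcoeff_mpoly_of_coords (bigD1 j) //= eqxx mulr1.
rewrite big1 ?addr0 // => i ij; rewrite nth_uniq //; case: eqP => [/val_inj e|].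
  by rewrite e eqxx in ij.
by rewrite mulr0.
Qed.

Lemma mcoordsK : {in msupp_in P, cancel mcoords mpoly_of_coords}.
Proof.
move=> p /msupp_inP hp; apply/mpolyP => m; rewrite mcoeff_mpoly_of_coords.
have [mB|mNB] := boolP (m \in B); last first.
  rewrite hp -?memB // big1 // => i _; case: eqP => [iE|]; last by rewrite mulr0.
  by move: mNB; rewrite -iE mem_nth.
have im : (index m B < N)%N by rewrite index_mem.
rewrite (bigD1 (Ordinal im)) //= nth_index // eqxx mulr1 mxE /= nth_index //.
rewrite big1 ?addr0 // => i ij; rewrite mxE.
case: eqP => [iE|]; last by rewrite mulr0.
by case/eqP: ij; apply: val_inj; rewrite /= -iE index_uniq.
Qed.

Variable f : {linear {mpoly F[n]} -> {mpoly F[n]}}.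
Hypothesis f_stable : forall p, p \is msupp_in P -> f p \is msupp_in P.

Lemma msupp_in_inj_surj :
  (forall p, p \is msupp_in P -> f p = 0 -> p = 0) <->
  (forall g, g \is msupp_in P -> exists2 p, p \is msupp_in P & f p = g).
Proof.
pose fB := mcoords \o f \o mpoly_of_coords.
have fBK u : mpoly_of_coords (mcoords (f (mpoly_of_coords u))) = f (mpoly_of_coords u).
  exact/mcoordsK/f_stable/mpoly_of_coords_msupp_in.
split=> [inj g hg | surj p hp fp0].
  have [fB_surj _] := rV_linear_inj_surj fB.
  have [|u /= fBu] := fB_surj _ (mcoords g).
    move=> u /= fBu0; rewrite -[u]mpoly_of_coordsK (inj _ (mpoly_of_coords_msupp_in u)).
      exact: linear0.
    by rewrite -fBK fBu0 linear0.
  exists (mpoly_of_coords u); first exact: mpoly_of_coords_msupp_in.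
  by rewrite -fBK fBu mcoordsK.
have [_ fB_inj] := rV_linear_inj_surj fB.
rewrite -(mcoordsK hp) (fB_inj _ (mcoords p)) ?linear0 //.
  move=> v; have [q hq fq] := surj _ (mpoly_of_coords_msupp_in v).
  by exists (mcoords q); rewrite /fB /= mcoordsK // fq mpoly_of_coordsK.
by rewrite /fB /= mcoordsK // fp0 linear0.
Qed.

End FiniteSupport.

Section Fischer.
Variables (R : realType) (n : nat).
Implicit Types (phi p q : {mpoly R[n]}).

Fact laplacian_is_linear : linear (@laplacian R n).
Proof.
move=> a p q; rewrite /laplacian scaler_sumr -big_split.
by apply: eq_bigr => i _; rewrite !linearP.
Qed.

HB.instance Definition _ := GRing.isLinear.Build R {mpoly R[n]} {mpoly R[n]} _
  (@laplacian R n) laplacian_is_linear.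

Fact Fischer_is_linear phi : linear (Fischer phi).
Proof. by move=> a p q; rewrite /Fischer mulrDr -scalerAr linearP. Qed.

HB.instance Definition _ phi := GRing.isLinear.Build R {mpoly R[n]} {mpoly R[n]} _
  (Fischer phi) (Fischer_is_linear phi).

Lemma FischerBl phi phi' q : Fischer (phi - phi') q = Fischer phi q - Fischer phi' q.
Proof. by rewrite /Fischer mulrBl linearB. Qed.

Lemma dhomog_laplacian k p : p \is k.-homog -> laplacian p \is (k.-2).-homog.
Proof. by move=> hp; apply: rpred_sum => i _; apply/dhomog_mderiv/dhomog_mderiv. Qed.

Lemma order_ge_laplacian k p : p \is order_ge k -> laplacian p \is order_ge k.-2.
Proof. by move=> hp; apply: rpred_sum => i _; apply/order_ge_mderiv/order_ge_mderiv. Qed.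

Lemma dhomog_Fischer j k phi q :
  phi \is j.-homog -> q \is k.-homog -> Fischer phi q \is ((j + k).-2).-homog.
Proof. by move=> hphi hq; apply/dhomog_laplacian/dhomogM. Qed.

Lemma order_ge_Fischer j k phi q :
  phi \is order_ge j -> q \is order_ge k -> Fischer phi q \is order_ge (j + k).-2.
Proof. by move=> hphi hq; apply/order_ge_laplacian/order_geM. Qed.

Lemma Fischer_homog_surj phi k g : phi \is 2.-homog ->
  (forall h, h \is k.-homog -> Fischer phi h = 0 -> h = 0) ->
  g \is k.-homog -> exists p, Fischer phi p = g.
Proof.
move=> hphi inj; rewrite dhomog_msupp_in; set P := [pred m | mdeg m == k].
have bounded (m : 'X_{1..n}) : P m -> (mdeg m < k.+1)%N by move=> /eqP ->.
have stable p : p \is msupp_in P -> Fischer phi p \is msupp_in P.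
  by rewrite -!dhomog_msupp_in; apply: dhomog_Fischer hphi.
have inj' p : p \is msupp_in P -> Fischer phi p = 0 -> p = 0.
  by rewrite -dhomog_msupp_in; apply: inj.
by move=> /((msupp_in_inj_surj bounded stable).1 inj') [p _ fp]; exists p.
Qed.

End Fischer.

Section Perturbation.
Variables (R : realType) (n : nat) (phi phi2 : {mpoly R[n]}).
Hypotheses (phi2_homog : phi2 \is 2.-homog) (phi_phi2 : phi - phi2 \is order_ge 3).

Let FischerE q : Fischer phi q = Fischer (phi - phi2) q + Fischer phi2 q.
Proof. by rewrite FischerBl subrK. Qed.

Lemma Fischer_order_ge k q : q \is order_ge k -> Fischer phi q \is order_ge k.
Proof.
move=> hq; rewrite FischerE rpredD //.
  exact: order_ge_le (leqnSn k) (order_ge_Fischer phi_phi2 hq).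
exact: order_ge_Fischer (dhomog_order_ge phi2_homog) hq.
Qed.

Lemma pihomog_Fischer k q : q \is order_ge k ->
  pihomog mdeg k (Fischer phi q) = Fischer phi2 (pihomog mdeg k q).
Proof.
move=> hq; set h := pihomog mdeg k q.
have rest : Fischer phi q - Fischer phi2 h \is order_ge k.+1.
  rewrite FischerE -addrA -linearB rpredD //.
    exact: order_ge_Fischer phi_phi2 hq.
  exact: order_ge_Fischer (dhomog_order_ge phi2_homog) (order_ge_subpihomog hq).
have h_homog : Fischer phi2 h \is k.-homog.
  exact: dhomog_Fischer phi2_homog (pihomogP _ _ _).
rewrite -(subrK (Fischer phi2 h) (Fischer phi q)) linearD /=.
by rewrite (pihomog_order_ge (ltnSn k) rest) add0r pihomog_dE.
Qed.

Lemma Fischer_inj :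
  (forall k h, h \is k.-homog -> Fischer phi2 h = 0 -> h = 0) -> injective (Fischer phi).
Proof.
move=> homog_inj; apply: raddf_inj => q q0.
suff /(_ (msize q)) : forall k, q \is order_ge k by rewrite order_ge_msize => /eqP.
elim=> [|k ihk]; first by apply/order_geP.
have h0 : pihomog mdeg k q = 0.
  by apply: homog_inj (pihomogP _ _ _) _; rewrite -pihomog_Fischer // q0 linear0.
by have := order_ge_subpihomog ihk; rewrite h0 subr0.
Qed.

Hypothesis Fischer_surj : forall f, exists q, Fischer phi q = f.

Lemma Fischer_homog_inj k h : h \is k.-homog -> Fischer phi2 h = 0 -> h = 0.
Proof.
move=> hh L2h0; pose P := [pred m : 'X_{1..n} | mdeg m < k.+1]%N.
pose T := mtrunc k.+1 \o Fischer phi.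
have bounded (m : 'X_{1..n}) : P m -> (mdeg m < k.+1)%N by [].
have T_stable p : p \is msupp_in P -> T p \is msupp_in P.
  by move=> _; apply: mtrunc_msupp_in.
apply: (msupp_in_inj_surj bounded T_stable).2.
- move=> g hg; have [q Lq] := Fischer_surj g.
  exists (mtrunc k.+1 q); first exact: mtrunc_msupp_in.
  rewrite -[mtrunc k.+1 q](subKr q) linearB /= Lq mtrunc_id //.
  by rewrite mtrunc_order_ge ?subr0 // Fischer_order_ge // order_ge_submtrunc.
- move: hh; rewrite dhomog_msupp_in.
  by apply: msupp_in_sub => m; rewrite !inE => /eqP ->.
- rewrite /= /mtrunc big_ord_recr /= pihomog_Fischer ?dhomog_order_ge //.
  rewrite pihomog_dE // L2h0 addr0 big1 // => j _.
  exact: pihomog_order_ge (ltn_ord j) (Fischer_order_ge (dhomog_order_ge hh)).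
Qed.

End Perturbation.

Lemma inj_surj_bij (T : choiceType) (f : T -> T) :
  injective f -> (forall y, exists x, f x = y) -> bijective f.
Proof.
move=> inj surj.
have ex y : exists x, f x == y by have [x e] := surj y; exists x; apply/eqP.
exists (fun y => xchoose (ex y)) => [x|y]; last exact/eqP/(xchooseP (ex y)).
by apply: inj; apply/eqP/(xchooseP (ex (f x))).
Qed.

Theorem mainTheorem6 (R : realType) (d : nat) (psi : {mpoly R[d]})
  (psi_ : nat -> {mpoly R[d]}) (t : nat) :
  zero_mult_at0 psi 2 ->
  (2 <= t)%N ->
  (forall j, psi_ j \is j.-homog) ->
  psi = \sum_(2 <= j < t.+1) psi_ j ->
  psi_ 2%N != 0 -> psi_ t != 0 ->
  (forall f : {mpoly R[d]}, exists q, Fischer psi q = f) ->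
  bijective (Fischer (psi_ 2%N)) /\ bijective (Fischer psi).
Proof.
move=> _ t_ge2 psi_homog psiE _ _ surj.
have psi2_homog := psi_homog 2%N.
have psi_psi2 : psi - psi_ 2%N \is order_ge 3.
  rewrite psiE big_ltn // addrC addKr big_nat_cond.
  apply: rpred_sum => j /andP[/andP[j_ge3 _] _].
  exact: order_ge_le j_ge3 (dhomog_order_ge (psi_homog j)).
have psi2_psi2 : psi_ 2%N - psi_ 2%N \is order_ge 3 by rewrite subrr rpred0.
have homog_inj := Fischer_homog_inj psi2_homog psi_psi2 surj.
split; apply: inj_surj_bij.
- exact: Fischer_inj psi2_homog psi2_psi2 homog_inj.
- apply: additive_surj_homog => k g.
  exact: Fischer_homog_surj psi2_homog (homog_inj k).
- exact: Fischer_inj psi2_homog psi_psi2 homog_inj.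
- exact: surj.
Qed.
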